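(* For $n\ge1$ let $X_n=(-1/n,1/n)\subseteq\mathbb R$ and let $X$ be the pro-set given by the inverse system $(X_n)_{n\ge1}$ with inclusion maps. Then $X$ carries the structure of an abelian group object in $\operatorname{Pro}(\mathbf{Set})$ with neutral element given by $0\in X_n$, inverse given levelwise by $x\mapsto-x$ on $X_n$, and addition $X\times X\to X$ given at index $n$ by $X_{2n}\times X_{2n}\to X_n$, $(x,y)\mapsto x+y$. This group object is nontrivial, but every homomorphism of group objects $G\to X$ in $\operatorname{Pro}(\mathbf{Set})$ from (the image of) a pro-group $G$ is trivial. In particular, $X$ is not isomorphic to the image of any pro-group, so the canonical functor $\operatorname{Pro}(\mathbf{Grp})\to\mathrm{Grp}(\operatorname{Pro}(\mathbf{Set}))$ is not an equivalence.
   Context: For a category $\mathcal C$, $\operatorname{Pro}(\mathcal C)$ is its pro-completion: objects are inverse systems, i.e. functors $X\colon \mathcal I_X^{op}\to\mathcal C$ with $\mathcal I_X$ a small filtered category, and $\operatorname{Hom}_{\operatorname{Pro}(\mathcal C)}(X,Y)=\varprojlim_{j\in\mathcal I_Y}\varinjlim_{i\in\mathcal I_X}\mathcal C(X_i,Y_j)$. $\mathrm{Grp}(\mathcal D)$ is the category of group objects in a category $\mathcal D$ with finite products; the canonical functor $\operatorname{Pro}(\mathbf{Grp})\to\mathrm{Grp}(\operatorname{Pro}(\mathbf{Set}))$ uses levelwise operations. *)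

From Stdlib Require Import Reals Lra Lia Arith ClassicalEpsilon ProofIrrelevance.
Open Scope R_scope.

Record Cat := {
  ob :> Type;
  hom : ob -> ob -> Type;
  idc : forall a, hom a a;
  comp : forall x y z, hom y z -> hom x y -> hom x z;
  comp_id_l : forall a b (f : hom a b), comp a b b (idc b) f = f;
  comp_id_r : forall a b (f : hom a b), comp a a b f (idc a) = f;
  comp_assoc : forall a b c d (h : hom c d) (g : hom b c) (f : hom a b),
      comp a c d h (comp a b c g f) = comp a b d (comp b c d h g) f }.
Arguments hom {_} _ _.
Arguments idc {_} _.
Arguments comp {_ _ _ _} _ _.

Definition filtered (I : Cat) : Prop :=
  inhabited (ob I) /\
  (forall a b : I, inhabited {c : I & (hom a c * hom b c)%type}) /\
  (forall (a b : I) (f g : hom a b),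
      inhabited {c : I & {h : hom b c | comp h f = comp h g}}).

Record FCat := { fcat :> Cat; fcat_filtered : filtered fcat }.

Record ProSet := {
  idx : FCat;
  lev : idx -> Type;
  tr : forall a b : idx, hom a b -> lev b -> lev a;
  tr_id : forall a (x : lev a), tr a a (idc a) x = x;
  tr_comp : forall a b c (g : hom b c) (f : hom a b) (x : lev c),
      tr a c (comp g f) x = tr a b f (tr b c g x) }.
Arguments tr _ {_ _} _ _.

(* Two representatives (i,f), (i',f') of the colimit colim_i Set(X_i, T)
   are identified iff they agree after restriction to some common index. *)
Definition germ_eq (X : ProSet) (T : Type) (i i' : idx X)
  (f : lev X i -> T) (f' : lev X i' -> T) : Prop :=
  exists (k : idx X) (u : hom i k) (u' : hom i' k),
    forall x : lev X k, f (tr X u x) = f' (tr X u' x).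
Arguments germ_eq _ {_ _ _} _ _.

(* Level representation of a pro-morphism: a choice, for each j, of a
   representative of the j-th component of lim_j colim_i Set(X_i, Y_j). *)
Record RawMor (X Y : ProSet) := {
  pidx : idx Y -> idx X;
  pmap : forall j, lev X (pidx j) -> lev Y j }.
Arguments pidx {_ _} _ _.
Arguments pmap {_ _} _ _ _.

(* compatibility, i.e. the family defines an element of the limit *)
Definition valid {X Y : ProSet} (f : RawMor X Y) : Prop :=
  forall (j j' : idx Y) (v : hom j j'),
    germ_eq X (fun x => tr Y v (pmap f j' x)) (pmap f j).

Definition mor_eq {X Y : ProSet} (f g : RawMor X Y) : Prop :=
  forall j, germ_eq X (pmap f j) (pmap g j).

Definition idm (X : ProSet) : RawMor X X :=
  {| pidx := fun j => j; pmap := fun j x => x |}.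

Definition compm {X Y Z : ProSet} (g : RawMor Y Z) (f : RawMor X Y) : RawMor X Z :=
  {| pidx := fun k => pidx f (pidx g k);
     pmap := fun k x => pmap g k (pmap f (pidx g k) x) |}.

Definition prodCat (I J : Cat) : Cat.
Proof.
  refine {| ob := (ob I * ob J)%type;
            hom := fun p q => (hom (fst p) (fst q) * hom (snd p) (snd q))%type;
            idc := fun p => (idc (fst p), idc (snd p));
            comp := fun p q r g f => (comp (fst g) (fst f), comp (snd g) (snd f)) |}.
  - intros a b [f1 f2]; simpl; now rewrite !comp_id_l.
  - intros a b [f1 f2]; simpl; now rewrite !comp_id_r.
  - intros a b c d [h1 h2] [g1 g2] [f1 f2]; simpl; now rewrite !comp_assoc.
Defined.

Lemma prodCat_filtered (I J : FCat) : filtered (prodCat I J).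
Proof.
  destruct (fcat_filtered I) as [[i0] [HI1 HI2]].
  destruct (fcat_filtered J) as [[j0] [HJ1 HJ2]].
  split; [|split].
  - exact (inhabits (i0, j0)).
  - intros [a1 a2] [b1 b2].
    destruct (HI1 a1 b1) as [[c1 [u1 v1]]]; destruct (HJ1 a2 b2) as [[c2 [u2 v2]]].
    exact (inhabits (existT _ ((c1, c2) : prodCat I J) ((u1, u2), (v1, v2)))).
  - intros [a1 a2] [b1 b2] [f1 f2] [g1 g2].
    destruct (HI2 _ _ f1 g1) as [[c1 [h1 e1]]]; destruct (HJ2 _ _ f2 g2) as [[c2 [h2 e2]]].
    refine (inhabits (existT _ ((c1, c2) : prodCat I J) (exist _ ((h1, h2) : @hom (prodCat I J) (b1,b2) (c1,c2)) _))).
    simpl in *; now rewrite e1, e2.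
Qed.

Definition prodFCat (I J : FCat) : FCat :=
  {| fcat := prodCat I J; fcat_filtered := prodCat_filtered I J |}.

Definition prodP (X Y : ProSet) : ProSet.
Proof.
  refine {| idx := prodFCat (idx X) (idx Y);
            lev := fun p => (lev X (fst p) * lev Y (snd p))%type;
            tr := fun p q u z => (tr X (fst u) (fst z), tr Y (snd u) (snd z)) |}.
  - intros [a b] [x y]; simpl; now rewrite !tr_id.
  - intros a b c [g1 g2] [f1 f2] [x y]; simpl; now rewrite !tr_comp.
Defined.

Definition unitCat : Cat.
Proof.
  refine {| ob := unit; hom := fun _ _ => unit; idc := fun _ => tt;
            comp := fun _ _ _ _ _ => tt |}.
  - now intros a b [].
  - now intros a b [].
  - reflexivity.
Defined.

Lemma unitCat_filtered : filtered unitCat.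
Proof.
  split; [|split].
  - exact (inhabits tt).
  - intros a b; exact (inhabits (existT _ (tt : unitCat) (tt, tt))).
  - intros a b f g; exact (inhabits (existT _ (tt : unitCat) (exist _ (tt : @hom unitCat b tt) eq_refl))).
Qed.

Definition OneP : ProSet.
Proof.
  refine {| idx := {| fcat := unitCat; fcat_filtered := unitCat_filtered |};
            lev := fun _ => unit; tr := fun _ _ _ _ => tt |}.
  - now intros a [].
  - reflexivity.
Defined.

Definition prodm {X X' Y Y' : ProSet} (f : RawMor X X') (g : RawMor Y Y')
  : RawMor (prodP X Y) (prodP X' Y') :=
  {| pidx := fun (p : idx (prodP X' Y')) => ((pidx f (fst p), pidx g (snd p)) : idx (prodP X Y));
     pmap := fun p z => (pmap f (fst p) (fst z), pmap g (snd p) (snd z)) |}.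

Definition assocm (A B C : ProSet) : RawMor (prodP (prodP A B) C) (prodP A (prodP B C)) :=
  {| pidx := fun (p : idx (prodP A (prodP B C))) =>
               (((fst p, fst (snd p)), snd (snd p)) : idx (prodP (prodP A B) C));
     pmap := fun p z => (fst (fst z), (snd (fst z), snd z)) |}.

Definition swapm (A B : ProSet) : RawMor (prodP A B) (prodP B A) :=
  {| pidx := fun (p : idx (prodP B A)) => ((snd p, fst p) : idx (prodP A B));
     pmap := fun p z => (snd z, fst z) |}.

Definition lunitinv (A : ProSet) : RawMor A (prodP OneP A) :=
  {| pidx := fun (p : idx (prodP OneP A)) => snd p; pmap := fun p x => (tt, x) |}.
Definition runitinv (A : ProSet) : RawMor A (prodP A OneP) :=
  {| pidx := fun (p : idx (prodP A OneP)) => fst p; pmap := fun p x => (x, tt) |}.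

Definition some_idx (X : ProSet) : idx X :=
  epsilon (proj1 (fcat_filtered (idx X))) (fun _ => True).
Definition ubound (X : ProSet) (a b : idx X) : {c : idx X & (hom a c * hom b c)%type} :=
  epsilon (proj1 (proj2 (fcat_filtered (idx X))) a b) (fun _ => True).

Definition bang (X : ProSet) : RawMor X OneP :=
  {| pidx := fun _ => some_idx X; pmap := fun (_ : idx OneP) _ => (tt : lev OneP tt) |}.

Definition pairm {W A B : ProSet} (f : RawMor W A) (g : RawMor W B) : RawMor W (prodP A B) :=
  {| pidx := fun (p : idx (prodP A B)) => projT1 (ubound W (pidx f (fst p)) (pidx g (snd p)));
     pmap := fun p w =>
       (pmap f (fst p) (tr W (fst (projT2 (ubound W (pidx f (fst p)) (pidx g (snd p))))) w),
        pmap g (snd p) (tr W (snd (projT2 (ubound W (pidx f (fst p)) (pidx g (snd p))))) w)) |}.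

Definition is_group_obj (Y : ProSet) (m : RawMor (prodP Y Y) Y) (e : RawMor OneP Y)
  (i : RawMor Y Y) : Prop :=
  valid m /\ valid e /\ valid i /\
  mor_eq (compm m (prodm m (idm Y))) (compm m (compm (prodm (idm Y) m) (assocm Y Y Y))) /\
  mor_eq (compm m (compm (prodm e (idm Y)) (lunitinv Y))) (idm Y) /\
  mor_eq (compm m (compm (prodm (idm Y) e) (runitinv Y))) (idm Y) /\
  mor_eq (compm m (pairm i (idm Y))) (compm e (bang Y)) /\
  mor_eq (compm m (pairm (idm Y) i)) (compm e (bang Y)).

Definition is_abgroup_obj (Y : ProSet) (m : RawMor (prodP Y Y) Y) (e : RawMor OneP Y)
  (i : RawMor Y Y) : Prop :=
  is_group_obj Y m e i /\ mor_eq (compm m (swapm Y Y)) m.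

Definition is_ghom {Y Y' : ProSet} (m : RawMor (prodP Y Y) Y) (m' : RawMor (prodP Y' Y') Y')
  (f : RawMor Y Y') : Prop :=
  mor_eq (compm m' (prodm f f)) (compm f m).

Record Grp := {
  gcar :> Type;
  gmul : gcar -> gcar -> gcar;
  gone : gcar;
  ginv : gcar -> gcar;
  gmulA : forall x y z, gmul x (gmul y z) = gmul (gmul x y) z;
  gmul1l : forall x, gmul gone x = x;
  gmul1r : forall x, gmul x gone = x;
  gmulVl : forall x, gmul (ginv x) x = gone }.

Record ProGrp := {
  gidx : FCat;
  glev : gidx -> Grp;
  gtr : forall a b : gidx, hom a b -> glev b -> glev a;
  gtr_mul : forall a b (u : hom a b) (x y : glev b),
      gtr a b u (gmul _ x y) = gmul _ (gtr a b u x) (gtr a b u y);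
  gtr_id : forall a (x : glev a), gtr a a (idc a) x = x;
  gtr_comp : forall a b c (g : hom b c) (f : hom a b) (x : glev c),
      gtr a c (comp g f) x = gtr a b f (gtr b c g x) }.

(* image of a pro-group under Pro(Grp) -> Grp(Pro(Set)), levelwise operations *)
Definition proset_of (G : ProGrp) : ProSet :=
  {| idx := gidx G; lev := fun a => gcar (glev G a); tr := gtr G;
     tr_id := gtr_id G; tr_comp := gtr_comp G |}.

Definition mulG (G : ProGrp) : RawMor (prodP (proset_of G) (proset_of G)) (proset_of G) :=
  {| pidx := fun (a : idx (proset_of G)) => ((a, a) : idx (prodP (proset_of G) (proset_of G)));
     pmap := fun a z => gmul (glev G a) (fst z) (snd z) |}.
Definition oneG (G : ProGrp) : RawMor OneP (proset_of G) :=
  {| pidx := fun _ => (tt : idx OneP); pmap := fun (a : idx (proset_of G)) _ => (gone (glev G a) : lev (proset_of G) a) |}.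
Definition invG (G : ProGrp) : RawMor (proset_of G) (proset_of G) :=
  {| pidx := fun (a : idx (proset_of G)) => a; pmap := fun (a : idx (proset_of G)) (x : lev (proset_of G) a) => (ginv (glev G a) x : lev (proset_of G) a) |}.

Definition posnat := {n : nat | (1 <= n)%nat}.

Definition NCat : Cat.
Proof.
  refine {| ob := posnat; hom := fun a b => (proj1_sig a <= proj1_sig b)%nat;
            idc := fun a => le_n _;
            comp := fun a b c g f => Nat.le_trans _ _ _ f g |}.
  - intros; apply le_unique.
  - intros; apply le_unique.
  - intros; apply le_unique.
Defined.

Lemma NCat_filtered : filtered NCat.
Proof.
  split; [|split].
  - exact (inhabits (exist _ 1%nat (le_n 1))).
  - intros [a Ha] [b Hb].
    assert (Hm : (1 <= Nat.max a b)%nat) by lia.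
    refine (inhabits (existT _ (exist _ (Nat.max a b) Hm : NCat) (_, _))); simpl; lia.
  - intros a b f g; refine (inhabits (existT _ b (exist _ (idc b) _))); apply le_unique.
Qed.

Definition Xlev (n : posnat) : Type :=
  {x : R | - (1 / INR (proj1_sig n)) < x < 1 / INR (proj1_sig n)}.

Lemma inv_le_of_le (a b : nat) : (1 <= a)%nat -> (a <= b)%nat -> 1 / INR b <= 1 / INR a.
Proof.
  intros Ha Hab. apply le_INR in Ha, Hab. simpl in Ha. unfold Rdiv; rewrite !Rmult_1_l.
  apply Rinv_le_contravar; lra.
Qed.

Lemma Xincl_pf (a b : posnat) (h : (proj1_sig a <= proj1_sig b)%nat) (x : Xlev b) :
  - (1 / INR (proj1_sig a)) < proj1_sig x < 1 / INR (proj1_sig a).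
Proof.
  destruct x as [x Hx]; simpl. pose proof (inv_le_of_le _ _ (proj2_sig a) h). lra.
Qed.

Definition Xtr (a b : posnat) (h : (proj1_sig a <= proj1_sig b)%nat) (x : Xlev b) : Xlev a :=
  exist _ (proj1_sig x) (Xincl_pf a b h x).

Definition Xpro : ProSet.
Proof.
  refine {| idx := {| fcat := NCat; fcat_filtered := NCat_filtered |};
            lev := Xlev; tr := Xtr |}.
  - intros a [x Hx]; unfold Xtr; simpl; f_equal; apply proof_irrelevance.
  - intros a b c g f [x Hx]; unfold Xtr; simpl; f_equal; apply proof_irrelevance.
Defined.

Lemma Xzero_pf (n : posnat) : - (1 / INR (proj1_sig n)) < 0 < 1 / INR (proj1_sig n).
Proof.
  pose proof (le_INR _ _ (proj2_sig n)) as H; simpl in H.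
  assert (0 < 1 / INR (proj1_sig n)) by (apply Rdiv_lt_0_compat; lra). lra.
Qed.

Definition eX : RawMor OneP Xpro :=
  {| pidx := fun _ => (tt : idx OneP);
     pmap := fun (n : idx Xpro) _ => (exist _ 0 (Xzero_pf n) : lev Xpro n) |}.

Lemma Xopp_pf (n : posnat) (x : Xlev n) :
  - (1 / INR (proj1_sig n)) < - proj1_sig x < 1 / INR (proj1_sig n).
Proof. destruct x as [x Hx]; simpl; lra. Qed.

Definition iX : RawMor Xpro Xpro :=
  {| pidx := fun n => n; pmap := fun (n : idx Xpro) x => (exist _ _ (Xopp_pf n x) : lev Xpro n) |}.

Lemma double_pos (n : posnat) : (1 <= 2 * proj1_sig n)%nat.
Proof. destruct n; simpl; lia. Qed.

Definition dbl (n : posnat) : posnat := exist _ (2 * proj1_sig n)%nat (double_pos n).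

Lemma Xadd_pf (n : posnat) (x y : Xlev (dbl n)) :
  - (1 / INR (proj1_sig n)) < proj1_sig x + proj1_sig y < 1 / INR (proj1_sig n).
Proof.
  destruct x as [x Hx]; destruct y as [y Hy]; unfold dbl in *; simpl proj1_sig in *.
  rewrite Nat.add_0_r, plus_INR in Hx, Hy.
  pose proof (le_INR _ _ (proj2_sig n)) as H; simpl in H.
  set (k := INR (proj1_sig n)) in *.
  assert (E : 1 / (k + k) = (1 / k) / 2) by (field; lra).
  rewrite E in Hx, Hy. lra.
Qed.

Definition mX : RawMor (prodP Xpro Xpro) Xpro :=
  {| pidx := fun (n : idx Xpro) => ((dbl n, dbl n) : idx (prodP Xpro Xpro));
     pmap := fun (n : idx Xpro) z => (exist _ _ (Xadd_pf n (fst z) (snd z)) : lev Xpro n) |}.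

From Stdlib Require Import Reals Lra Lia ProofIrrelevance.
Open Scope R_scope.

(* A homomorphism of group objects f : G -> X, with G a pro-group, becomes at each
   level n, after restriction to a suitable index of G, an additive map from a group
   into the bounded interval (-1/n, 1/n).  Such a map vanishes, since its values on
   the powers of an element grow linearly.  Hence every such f is trivial, whereas
   id_X is not, because every X_n has nonzero points; so X is not the image of a
   pro-group. *)

Lemma filtered_cocone2 (I : FCat) (a b k1 k2 : I)
    (u1 : hom a k1) (u2 : hom a k2) (v1 : hom b k1) (v2 : hom b k2) :
  exists (K : I) (r1 : hom k1 K) (r2 : hom k2 K),
    comp r1 u1 = comp r2 u2 /\ comp r1 v1 = comp r2 v2.
Proof.
  destruct (fcat_filtered I) as [_ [ub coeq]].
  destruct (ub k1 k2) as [[m [p1 p2]]].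
  destruct (coeq _ _ (comp p1 u1) (comp p2 u2)) as [[c [h Ehu]]].
  destruct (coeq _ _ (comp h (comp p1 v1)) (comp h (comp p2 v2))) as [[c' [h' Ehv]]].
  exists c', (comp h' (comp h p1)), (comp h' (comp h p2)).
  rewrite <- !comp_assoc; split; [now rewrite Ehu | exact Ehv].
Qed.

Definition eventually_const (X : ProSet) {T : Type} {i : idx X}
    (f : lev X i -> T) (c : T) : Prop :=
  exists (k : idx X) (h : hom i k), forall x, f (tr X h x) = c.

Lemma eventually_const_of_germ_eq (X : ProSet) (T : Type) (i i' : idx X)
    (f : lev X i -> T) (c : T) :
  germ_eq X f (fun _ : lev X i' => c) -> eventually_const X f c.
Proof. intros [k [u [_ Hu]]]; now exists k, u. Qed.

Lemma germ_eq_of_eventually_const (X : ProSet) (T : Type) (i i' : idx X)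
    (f : lev X i -> T) (c : T) :
  eventually_const X f c -> germ_eq X f (fun _ : lev X i' => c).
Proof.
  intros [k [h Hh]].
  destruct (proj1 (proj2 (fcat_filtered (idx X))) k i') as [[m [p q]]].
  exists m, (comp p h), q; intros x.
  now rewrite tr_comp, Hh.
Qed.

Lemma eventually_const_germ_eq (X : ProSet) (T : Type) (i i' : idx X)
    (f : lev X i -> T) (f' : lev X i' -> T) (c : T) :
  eventually_const X f c -> germ_eq X f f' -> eventually_const X f' c.
Proof.
  intros [k [h Hh]] [k' [u [u' Hu]]].
  destruct (filtered_cocone2 (idx X) i i k k' h u h u) as [m [p [q [Epq _]]]].
  exists m, (comp q u'); intros x.
  now rewrite tr_comp, <- Hu, <- tr_comp, <- Epq, tr_comp, Hh.
Qed.

Lemma eventually_const_compm (W Y : ProSet) (g : RawMor W Y) (T : Type) (i : idx Y)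
    (f : lev Y i -> T) (c : T) :
  valid g -> eventually_const Y f c ->
  eventually_const W (fun w => f (pmap g i w)) c.
Proof.
  intros Hg [k [h Hh]].
  destruct (Hg i k h) as [m [a [b Hab]]].
  exists m, b; intros w.
  now rewrite <- Hab, Hh.
Qed.

Lemma additive_bounded_eq0 (Gr : Grp) (phi : Gr -> R) (B : R) :
  (forall x y, phi (gmul Gr x y) = phi x + phi y) ->
  (forall x, Rabs (phi x) < B) -> forall x, phi x = 0.
Proof.
  intros Hadd Hbd x.
  assert (multiples : forall m : nat, exists y, phi y = INR m * phi x).
  { induction m as [|m [y Hy]].
    - exists (gone Gr). pose proof (Hadd (gone Gr) (gone Gr)) as H.
      rewrite gmul1l in H. simpl. lra.
    - exists (gmul Gr y x). rewrite Hadd, Hy, S_INR. ring. }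
  destruct (Req_dec (phi x) 0) as [|Hx]; [assumption | exfalso].
  destruct (INR_archimed (Rabs (phi x)) B (Rabs_pos_lt _ Hx)) as [m Hm].
  destruct (multiples m) as [y Hy].
  specialize (Hbd y). rewrite Hy, Rabs_mult, (Rabs_right (INR m)) in Hbd.
  - lra.
  - apply Rle_ge, pos_INR.
Qed.

Lemma Xval_inj (n : posnat) (x y : Xlev n) : proj1_sig x = proj1_sig y -> x = y.
Proof. destruct x, y; simpl; intros ->; f_equal; apply proof_irrelevance. Qed.

Lemma Xlev_abs_lt (n : posnat) (x : Xlev n) : Rabs (proj1_sig x) < 1 / INR (proj1_sig n).
Proof. destruct x as [x Hx]; simpl; apply Rabs_def1; lra. Qed.

Lemma Xlev_nonzero (n : posnat) : exists x : Xlev n, proj1_sig x <> 0.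
Proof.
  pose proof (le_INR _ _ (proj2_sig n)) as Hn; simpl in Hn.
  set (k := INR (proj1_sig n)) in *.
  assert (Hhalf : 0 < 1 / (2 * k) < 1 / k).
  { split; unfold Rdiv; rewrite !Rmult_1_l.
    - apply Rinv_0_lt_compat; lra.
    - apply Rinv_lt_contravar; nra. }
  assert (Hx : - (1 / k) < 1 / (2 * k) < 1 / k) by lra.
  exists (exist _ (1 / (2 * k)) Hx); simpl; lra.
Qed.

Lemma X_not_eventually_zero (n : idx Xpro) :
  ~ eventually_const Xpro (fun x : lev Xpro n => x) (pmap eX n tt).
Proof.
  intros [k [h Hh]].
  destruct (Xlev_nonzero k) as [x Hx].
  apply Hx, (f_equal (@proj1_sig _ _) (Hh x)).
Qed.

Ltac index_le := simpl in *; repeat split; simpl; lia.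

Lemma valid_mX : valid mX.
Proof.
  intros j j' v; exists ((dbl j', dbl j') : idx (prodP Xpro Xpro)).
  unshelve eexists; [index_le|]; unshelve eexists; [index_le|].
  intros [x y]; now apply Xval_inj.
Qed.

Lemma valid_eX : valid eX.
Proof. intros j j' v; exists tt, tt, tt; intros x; now apply Xval_inj. Qed.

Lemma valid_iX : valid iX.
Proof.
  intros j j' v; exists j'.
  unshelve eexists; [index_le|]; unshelve eexists; [index_le|].
  intros x; now apply Xval_inj.
Qed.

Lemma mX_assoc :
  mor_eq (compm mX (prodm mX (idm Xpro)))
         (compm mX (compm (prodm (idm Xpro) mX) (assocm Xpro Xpro Xpro))).
Proof.
  intros n.
  exists (((dbl (dbl n), dbl (dbl n)), dbl (dbl n)) : idx (prodP (prodP Xpro Xpro) Xpro)).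
  unshelve eexists; [index_le|]; unshelve eexists; [index_le|].
  intros [[x y] z]; apply Xval_inj; simpl; ring.
Qed.

Lemma mX_unit_l : mor_eq (compm mX (compm (prodm eX (idm Xpro)) (lunitinv Xpro))) (idm Xpro).
Proof.
  intros n; exists (dbl n).
  unshelve eexists; [index_le|]; unshelve eexists; [index_le|].
  intros x; apply Xval_inj; simpl; ring.
Qed.

Lemma mX_unit_r : mor_eq (compm mX (compm (prodm (idm Xpro) eX) (runitinv Xpro))) (idm Xpro).
Proof.
  intros n; exists (dbl n).
  unshelve eexists; [index_le|]; unshelve eexists; [index_le|].
  intros x; apply Xval_inj; simpl; ring.
Qed.

Lemma mX_inv_l : mor_eq (compm mX (pairm iX (idm Xpro))) (compm eX (bang Xpro)).
Proof.
  intros n; refine (germ_eq_of_eventually_const _ _ _ _ _ (pmap eX n tt) _).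
  exists _, (idc _); intros x; apply Xval_inj; simpl; ring.
Qed.

Lemma mX_inv_r : mor_eq (compm mX (pairm (idm Xpro) iX)) (compm eX (bang Xpro)).
Proof.
  intros n; refine (germ_eq_of_eventually_const _ _ _ _ _ (pmap eX n tt) _).
  exists _, (idc _); intros x; apply Xval_inj; simpl; ring.
Qed.

Lemma mX_comm : mor_eq (compm mX (swapm Xpro Xpro)) mX.
Proof.
  intros n; exists ((dbl n, dbl n) : idx (prodP Xpro Xpro)).
  unshelve eexists; [index_le|]; unshelve eexists; [index_le|].
  intros [x y]; apply Xval_inj; simpl; ring.
Qed.

Lemma Xpro_abgroup_obj : is_abgroup_obj Xpro mX eX iX.
Proof.
  repeat split; auto using valid_mX, valid_iX, valid_eX, mX_assoc, mX_unit_l, mX_unit_r,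
    mX_inv_l, mX_inv_r, mX_comm.
Qed.

(* The homomorphism condition expresses f_n (y z) through f_2n y + f_2n z, and validity
   of f identifies f_2n with f_n; K is an index of G where all these comparisons hold. *)
Lemma ghom_additive_level (G : ProGrp) (f : RawMor (proset_of G) Xpro) (n : idx Xpro) :
  valid f -> is_ghom (mulG G) mX f ->
  exists (K : gidx G) (h : hom (pidx f n) K), forall y z : glev G K,
    proj1_sig (pmap f n (gtr G _ _ h (gmul _ y z))) =
    proj1_sig (pmap f n (gtr G _ _ h y)) + proj1_sig (pmap f n (gtr G _ _ h z)).
Proof.
  intros Hv Hh.
  destruct (Hh n) as [[k1 k2] [[u1 u2] [[u1' u2'] Hmul]]]; simpl in u1, u2, u1', u2'.
  assert (v : @hom (idx Xpro) n (dbl n)) by (simpl; lia).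
  destruct (Hv n (dbl n) v) as [c [w [w' Hw]]].
  destruct (filtered_cocone2 (gidx G) _ _ k1 k2 u1' u2' u1 u2) as [K0 [r1 [r2 [E1 E2]]]].
  destruct (filtered_cocone2 (gidx G) _ _ K0 c (comp r1 u1') w' (comp r1 u1) w)
    as [K [s [r3 [E3 E4]]]].
  exists K, (comp s (comp r1 u1')).
  assert (Hdbl : forall y : glev G K,
    proj1_sig (pmap f (dbl n) (gtr G _ _ (comp s (comp r1 u1)) y)) =
    proj1_sig (pmap f n (gtr G _ _ (comp s (comp r1 u1')) y))).
  { intros y. rewrite E3, E4, !gtr_comp.
    exact (f_equal (@proj1_sig _ _) (Hw (gtr G _ _ r3 y))). }
  intros y z.
  pose proof (f_equal (@proj1_sig _ _)
    (Hmul (gtr G _ _ (comp s r1) y, gtr G _ _ (comp s r2) z))) as Hyz; simpl in Hyz.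
  rewrite <- !gtr_comp, <- !comp_assoc, <- E1, <- E2 in Hyz.
  rewrite gtr_mul, <- !Hdbl; exact (eq_sym Hyz).
Qed.

Lemma Xpro_nontrivial : ~ mor_eq (idm Xpro) (compm eX (bang Xpro)).
Proof.
  intros Htriv.
  pose (n := exist _ 1%nat (le_n 1) : idx Xpro).
  exact (X_not_eventually_zero n (eventually_const_of_germ_eq _ _ _ _ _ _ (Htriv n))).
Qed.

Lemma ghom_to_Xpro_trivial (G : ProGrp) (f : RawMor (proset_of G) Xpro) :
  valid f -> is_ghom (mulG G) mX f -> mor_eq f (compm eX (bang (proset_of G))).
Proof.
  intros Hv Hh n.
  destruct (ghom_additive_level G f n Hv Hh) as [K [h Hadd]].
  pose proof (additive_bounded_eq0 (glev G K) _ _ Hadd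
                (fun y => Xlev_abs_lt n _)) as Hzero.
  refine (germ_eq_of_eventually_const _ _ _ _ _ (pmap eX n tt) _).
  exists K, h; intros y; apply Xval_inj, Hzero.
Qed.

Lemma Xpro_not_progroup (G : ProGrp) :
  ~ exists (f : RawMor (proset_of G) Xpro) (g : RawMor Xpro (proset_of G)),
      valid f /\ valid g /\ is_ghom (mulG G) mX f /\
      mor_eq (compm g f) (idm (proset_of G)) /\ mor_eq (compm f g) (idm Xpro).
Proof.
  intros [f [g [Hf [Hg [Hh [_ Hfg]]]]]].
  pose (n := exist _ 1%nat (le_n 1) : idx Xpro).
  apply (X_not_eventually_zero n).
  apply (eventually_const_germ_eq _ _ _ _ (pmap (compm f g) n)); [|exact (Hfg n)].
  apply (eventually_const_compm _ _ g _ _ (pmap f n)); [exact Hg|].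
  exact (eventually_const_of_germ_eq _ _ _ _ _ _ (ghom_to_Xpro_trivial G f Hf Hh n)).
Qed.

Theorem mainTheorem15 :
  is_abgroup_obj Xpro mX eX iX /\
  ~ mor_eq (idm Xpro) (compm eX (bang Xpro)) /\
  (forall (G : ProGrp) (f : RawMor (proset_of G) Xpro),
      valid f -> is_ghom (mulG G) mX f ->
      mor_eq f (compm eX (bang (proset_of G)))) /\
  (forall G : ProGrp,
      ~ exists (f : RawMor (proset_of G) Xpro) (g : RawMor Xpro (proset_of G)),
          valid f /\ valid g /\ is_ghom (mulG G) mX f /\
          mor_eq (compm g f) (idm (proset_of G)) /\ mor_eq (compm f g) (idm Xpro)).
Proof.
  exact (conj Xpro_abgroup_obj (conj Xpro_nontrivial
           (conj ghom_to_Xpro_trivial Xpro_not_progroup))).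
Qed.
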